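(* Let $\mathcal{D}=(X,\mathcal{G},\mathcal{B})$ be an $\mathrm{STD}_\lambda[k;g]$, so that $v=|X|=\lambda g^2$ and $k=\lambda g$, where $\lambda\ge1$, $g\ge2$ and $(\lambda,g)\notin\{(1,2),(1,3),(2,2)\}$. Then there exists a semi-resolving set for the points of $\mathcal{D}$ of size $\left\lceil\frac{v\log v}{k-\lambda}\right\rceil$, i.e. a set $S_\mathcal{B}\subseteq\mathcal{B}$ of that size such that for every pair of distinct points $x,y\in X$ some block of $S_\mathcal{B}$ contains exactly one of $x,y$ (equivalently, is at different distances from $x$ and $y$ in the incidence graph).
   Context: A transversal design $\mathrm{TD}_\lambda[k;g]$ ($g\ge2$) is a triple $(X,\mathcal{G},\mathcal{B})$ where $X$ is a set of $kg$ points, $\mathcal{G}$ is a partition of $X$ into $k$ point classes of size $g$, and $\mathcal{B}$ is a family of $k$-subsets of $X$ (blocks) such that each block contains exactly one point of each point class and any two points from distinct point classes lie in exactly $\lambda$ blocks. It is symmetric (an $\mathrm{STD}_\lambda[k;g]$) if its dual (interchanging points and blocks) is also a $\mathrm{TD}_\lambda[k;g]$; then $k=\lambda g$ and $|X|=|\mathcal{B}|=\lambda g^2$. The incidence graph is the bipartite graph on $X\cup\mathcal{B}$ with $x$ adjacent to $B$ iff $x\in B$. $\log$ is the natural logarithm. *)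

From HB Require Import structures.
From mathcomp Require Import all_boot all_order all_algebra.

Set Implicit Arguments. Unset Strict Implicit. Unset Printing Implicit Defensive.

(* Transversal design TD_lambda[k;g] given by an incidence relation
   [inc : P -> Bk -> bool] between a finite point type [P] and a finite
   block type [Bk] (blocks are indexed, so repeated blocks are allowed). *)
Definition block_set (P Bk : finType) (inc : P -> Bk -> bool) (B : Bk) : {set P} :=
  [set x | inc x B].

Definition is_TD (P Bk : finType) (inc : P -> Bk -> bool) (lam k g : nat) : Prop :=
  2 <= g /\
  exists G : {set {set P}},
    [/\ partition G [set: P],
        #|G| = k &
        (forall C, C \in G -> #|C| = g)] /\
    [/\
        (forall B : Bk, #|block_set inc B| = k),
        (forall (B : Bk) C, C \in G -> #|block_set inc B :&: C| = 1) &
        (forall x y : P, pblock G x != pblock G y ->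
           #|[set B : Bk | inc x B && inc y B]| = lam)].

Definition dual_inc (P Bk : finType) (inc : P -> Bk -> bool) : Bk -> P -> bool :=
  fun B x => inc x B.

Definition is_STD (P Bk : finType) (inc : P -> Bk -> bool) (lam k g : nat) : Prop :=
  is_TD inc lam k g /\ is_TD (dual_inc inc) lam k g.

Definition semi_resolving_points (P Bk : finType) (inc : P -> Bk -> bool)
    (S : {set Bk}) : Prop :=
  forall x y : P, x != y -> exists2 B, B \in S & inc x B != inc y B.

(* Every point lies in k blocks and two distinct points share at most lam
   blocks, so each pair of points is separated by at least d = 2(k - lam)
   blocks.  A uniformly random N-set of the v blocks avoids all separators of
   a fixed pair with probability C(v - d, N) / C(v, N) <= (1 - d/v)^N
   <= exp(-dN/v), which is at most 1/v^2 once dN >= 2 v ln v; the union bound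
   over the fewer than v^2 pairs then leaves an N-set separating every pair.
   N = ceil(v ln v / (k - lam)) is admissible (N <= v) because
   ln(lam g^2) <= lam (g - 1), which the degree-4 Taylor bound for exp gives
   outside the three excluded cases. *)

From mathcomp Require Import all_boot all_order all_algebra.
From mathcomp Require Import all_classical all_reals all_analysis.
From mathcomp Require Import ring lra zify.

Set Implicit Arguments.
Unset Strict Implicit.
Unset Printing Implicit Defensive.

Import Order.TTheory GRing.Theory Num.Theory.
Local Open Scope ring_scope.

Lemma leq_card_bigcup (I T : finType) (A : {set I}) (F : I -> {set T}) :
  (#|\bigcup_(i in A) F i| <= \sum_(i in A) #|F i|)%N.
Proof.
elim/big_rec2: _ => [|i m U _ IH]; first by rewrite cards0.
by apply: leq_trans (leq_card_setU _ _).1 _; rewrite leq_add2l.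
Qed.

Lemma exists_card_hitting_set (I T : finType) (J : {set I}) (D : I -> {set T})
    (d N : nat) :
  (forall i, i \in J -> d <= #|D i|)%N ->
  (#|J| * 'C(#|T| - d, N) < 'C(#|T|, N))%N ->
  exists2 S : {set T}, #|S| = N &
    forall i, i \in J -> exists2 t, t \in S & t \in D i.
Proof.
move=> D_ge few_avoiding.
pose avoiding i := [set S : {set T} | (S \subset ~: D i) & #|S| == N].
have card_avoiding i : i \in J -> (#|avoiding i| <= 'C(#|T| - d, N))%N.
  move=> Ji; rewrite cards_draws leq_bin2l //.
  by have := cardsC (D i); have := D_ge i Ji; lia.
have card_bad : (#|\bigcup_(i in J) avoiding i| <= #|J| * 'C(#|T| - d, N))%N.
  apply: leq_trans (leq_card_bigcup _ _) _.
  by rewrite -sum_nat_const leq_sum.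
have : ~~ ([set S : {set T} | #|S| == N] \subset \bigcup_(i in J) avoiding i).
  apply: contraL few_avoiding => /subset_leq_card; rewrite card_draws => le_bad.
  by rewrite -leqNgt (leq_trans le_bad).
case/fintype.subsetPn => S; rewrite inE => /eqP cardS /finset.bigcupP notbad.
exists S => // i Ji.
have /fintype.subsetPn[t St] : ~~ (S \subset ~: D i).
  by apply/negP => sub; apply: notbad; exists i; rewrite // inE sub cardS /=.
by rewrite inE negbK; exists t.
Qed.

Lemma mul_sqS_leq_taylor4 (l m : nat) : (1 <= l)%N -> (3 <= l * m)%N ->
  (24 * (l * m.+1 ^ 2) <= 24 + 24 * (l * m) + 12 * (l * m) ^ 2 + 4 * (l * m) ^ 3
                          + (l * m) ^ 4)%N.
Proof.
move=> l_ge1 lm_ge3.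
have [l_le1|l_ge2] := leqP l 1%N.
  have -> : l = 1%N by lia.
  by rewrite !mul1n in lm_ge3 *; nia.
set x := (l * m)%N in lm_ge3 *.
have lm2 : (2 * (l * m ^ 2) <= x ^ 2)%N by rewrite /x; nia.
have l_le : (l <= x)%N by rewrite /x; nia.
have x3 : (48 * x <= 24 + 4 * x ^ 3 + x ^ 4)%N by nia.
have -> : (l * m.+1 ^ 2 = l * m ^ 2 + 2 * x + l)%N by rewrite /x; ring.
nia.
Qed.

Lemma expR_ge_taylor4 (R : realType) (x : R) : 0 <= x ->
  1 + x + x ^+ 2 / 2 + x ^+ 3 / 6 + x ^+ 4 / 24 <= expR x.
Proof.
move=> x_ge0.
have le_lim := nondecreasing_cvgn_le
  (nondecreasing_series (fun n _ _ => exp_coeff_ge0 n x_ge0))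
  (is_cvg_series_exp_coeff x) 5.
apply: le_trans le_lim; rewrite /series /= !big_nat_recr //= big_geq //.
rewrite /exp_coeff /factorial /= expr0 expr1 !divr1 add0r.
lra.
Qed.

Lemma ln_mul_sq_le (R : realType) (l g : nat) : (1 <= l)%N -> (2 <= g)%N ->
  ~ ((l, g) = (1, 2)%N \/ (l, g) = (1, 3)%N \/ (l, g) = (2, 2)%N) ->
  ln ((l * g ^ 2)%:R : R) <= (l * g - l)%:R.
Proof.
case: g => // m l_ge1 m_ge1 not_small.
have lm_ge3 : (3 <= l * m)%N.
  rewrite leqNgt; apply/negP => lm_lt3; apply: not_small.
  have [l1|l2] : l = 1%N \/ l = 2%N by nia.
  - have [->|->] : m = 1%N \/ m = 2%N by lia.
    + by left; rewrite l1.
    + by right; left; rewrite l1.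
  - have -> : m = 1%N by lia.
    by right; right; rewrite l2.
rewrite mulnS addKn -[X in _ <= X]expRK ler_ln ?posrE ?expR_gt0 ?ltr0n ?muln_gt0 ?l_ge1 //.
apply: le_trans _ (expR_ge_taylor4 (ler0n R (l * m))).
move: (mul_sqS_leq_taylor4 l_ge1 lm_ge3); rewrite -(ler_nat R).
rewrite !(natrD, natrM, natrX); lra.
Qed.

Lemma leq_bin_ratio (n d N : nat) :
  ('C(n - d, N) * n ^ N <= 'C(n, N) * (n - d) ^ N)%N.
Proof.
elim: N => [|N IH]; first by rewrite !bin0 !expn0.
rewrite -(leq_pmul2l (ltn0Sn N)).
have -> : (N.+1 * ('C(n - d, N.+1) * n ^ N.+1)
           = ((n - d - N) * n) * ('C(n - d, N) * n ^ N))%N.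
  by rewrite mulnA mul_bin_left expnS; ring.
have -> : (N.+1 * ('C(n, N.+1) * (n - d) ^ N.+1)
           = ((n - N) * (n - d)) * ('C(n, N) * (n - d) ^ N))%N.
  by rewrite mulnA mul_bin_left expnS; ring.
by apply: leq_mul => //; nia.
Qed.

Lemma leq_bin_sub_sq (R : realType) (n d N : nat) : (0 < n)%N -> (d <= n)%N ->
  2 * (n%:R : R) * ln n%:R <= d%:R * N%:R ->
  ('C(n - d, N) * n ^ 2 <= 'C(n, N))%N.
Proof.
move=> n_gt0 le_dn dN_ge.
have n_pos : 0 < (n%:R : R) by rewrite ltr0n.
pose q : R := (n - d)%:R / n%:R.
have q_le_expR : q <= expR (- (d%:R / n%:R)).
  by apply: le_trans (expR_ge1Dx _); rewrite /q natrB // mulrBl divff ?gt_eqF.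
have qN_sq_le1 : q ^+ N * n%:R ^+ 2 <= 1.
  apply: (@le_trans _ _ (expR (- (d%:R / n%:R)) ^+ N * n%:R ^+ 2)).
    rewrite ler_wpM2r ?exprn_ge0 ?ler0n // lerXn2r ?nnegrE ?expR_ge0 //.
    by rewrite divr_ge0 ?ler0n.
  rewrite -expRM_natr -[n%:R in X in _ * X ^+ 2]lnK ?posrE // -expRM_natr -expRD.
  rewrite expR_le1 -(@ler_pM2r _ n%:R) // mul0r mulrDl.
  have -> : - (d%:R / n%:R) * N%:R * n%:R = - (d%:R * N%:R) :> R.
    by field; rewrite gt_eqF.
  lra.
have := leq_bin_ratio n d N; rewrite -!(ler_nat R) !(natrM, natrX).
set C' := ('C(n - d, N))%:R : R; set C := ('C(n, N))%:R : R => ratio.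
have C'_le : C' <= C * q ^+ N.
  by rewrite /q exprMn exprVn mulrA ler_pdivlMr ?exprn_gt0.
apply: le_trans (ler_wpM2r (exprn_ge0 2 (ltW n_pos)) C'_le) _.
by rewrite -mulrA ler_piMr ?ler0n.
Qed.

Section TransversalDesign.
Variables (P Bk : finType) (inc : P -> Bk -> bool) (lam k g : nat).

Lemma card_TD_points : is_TD inc lam k g -> #|P| = (k * g)%N.
Proof.
move=> [_ [G [[partG cardG sizeG] _]]].
rewrite -cardsT (card_partition partG) (eq_bigr (fun _ => g)) => [|C /sizeG //].
by rewrite sum_nat_const cardG.
Qed.

Lemma TD_card_common_blocks_le (x y : P) : is_TD inc lam k g -> x != y ->
  (#|[set B | inc x B && inc y B]| <= lam)%N.
Proof.
move=> [_ [G [[partG _ _] [_ meet1 common]]]] neq_xy.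
have [same|] := eqVneq (finset.pblock G x) (finset.pblock G y); last by move/common->.
suff -> : [set B | inc x B && inc y B] = finset.set0 by rewrite cards0.
apply/setP => B; rewrite !inE; apply/negbTE/andP => -[xB yB].
have cover_G : finset.cover G = [set: P] by case/and3P: partG => /eqP.
have G_x : finset.pblock G x \in G by rewrite finset.pblock_mem // cover_G inE.
have xy_sub : [set x; y] \subset block_set inc B :&: finset.pblock G x.
  apply/fintype.subsetP => z; rewrite !inE => /orP[] /eqP->.
  - by rewrite xB finset.mem_pblock cover_G inE.
  - by rewrite yB same finset.mem_pblock cover_G inE.
by have := subset_leq_card xy_sub; rewrite cards2 neq_xy meet1.
Qed.

Lemma STD_card_separating_blocks (x y : P) : is_STD inc lam k g -> x != y ->
  (2 * (k - lam) <= #|[set B | inc x B != inc y B]|)%N.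
Proof.
move=> [TD [_ [_ [_ [deg _ _]]]]] neq_xy.
have deg_x := deg x; have deg_y := deg y.
rewrite /block_set /dual_inc in deg_x deg_y.
set X := [set B | inc x B] in deg_x; set Y := [set B | inc y B] in deg_y.
have -> : [set B | inc x B != inc y B] = (X :\: Y) :|: (Y :\: X).
  by apply/setP => B; rewrite !inE; case: (inc x B); case: (inc y B).
rewrite cardsU.
have -> : (X :\: Y) :&: (Y :\: X) = finset.set0.
  by apply/setP => B; rewrite !inE; case: (inc x B); case: (inc y B).
have XY : X :&: Y = [set B | inc x B && inc y B] by apply/setP => B; rewrite !inE.
have := TD_card_common_blocks_le TD neq_xy.
by rewrite cards0 subn0 !cardsD [Y :&: X]finset.setIC XY deg_x deg_y; lia.
Qed.

End TransversalDesign.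

Lemma exists_semi_resolving_points (R : realType) (P Bk : finType)
    (inc : P -> Bk -> bool) (d N : nat) :
  (0 < #|P| <= #|Bk|)%N -> (d <= #|Bk|)%N -> (N <= #|Bk|)%N ->
  (forall x y : P, x != y -> d <= #|[set B | inc x B != inc y B]|)%N ->
  2 * (#|Bk|%:R : R) * ln #|Bk|%:R <= d%:R * N%:R ->
  exists2 S : {set Bk}, #|S| = N & semi_resolving_points inc S.
Proof.
move=> /andP[P_gt0 le_PBk] le_dBk le_NBk sep dN_ge.
set J := [set p : P * P | p.1 != p.2].
have J_lt : (#|J| < #|Bk| ^ 2)%N.
  apply: leq_trans (leq_mul le_PBk le_PBk); rewrite -card_prod -cardsT.
  have /card_gt0P[x0 _] := P_gt0.
  rewrite proper_card // properT.
  by apply/negP => /eqP/setP/(_ (x0, x0)); rewrite !inE eqxx.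
have few_avoiding : (#|J| * 'C(#|Bk| - d, N) < 'C(#|Bk|, N))%N.
  have := leq_bin_sub_sq (leq_trans P_gt0 le_PBk) le_dBk dN_ge; have := bin_gt0 #|Bk| N.
  by rewrite le_NBk; nia.
have D_ge (p : P * P) : p \in J -> (d <= #|[set B | inc p.1 B != inc p.2 B]|)%N.
  by rewrite inE; apply: sep.
have [S card_S hit] := exists_card_hitting_set D_ge few_avoiding.
exists S => // x y neq_xy; have /hit[B BS] : (x, y) \in J by rewrite inE.
by rewrite inE; exists B.
Qed.

Lemma ceil_mul_ln_div (R : realType) (v e : nat) :
  (0 < v)%N -> (0 < e)%N -> ln (v%:R : R) <= e%:R ->
  exists2 N : nat, N%:Z = Num.ceil (v%:R * ln v%:R / e%:R : R) &
    (N <= v)%N /\ v%:R * ln v%:R <= e%:R * N%:R :> R.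
Proof.
move=> v_gt0 e_gt0 ln_le.
have v_pos : 0 < (v%:R : R) by rewrite ltr0n.
have e_pos : 0 < (e%:R : R) by rewrite ltr0n.
set X := _ / _.
have X_ge0 : 0 <= X by rewrite /X divr_ge0 ?mulr_ge0 ?ln_ge0 ?ler1n // ltW.
set N := `|Num.ceil X|%N.
have N_def : N%:Z = Num.ceil X by rewrite gez0_abs // ceil_ge0; lra.
exists N => //; split.
  by rewrite -lez_nat N_def ceil_le_int /X ler_pdivrMr //=; nra.
by have := ceil_ge X; rewrite -N_def -pmulrn /X ler_pdivrMr //; lra.
Qed.

Theorem theorem3p3 (R : realType) (P Bk : finType) (inc : P -> Bk -> bool)
    (lam k g : nat) :
  is_STD inc lam k g ->
  #|P| = (lam * g ^ 2)%N -> k = (lam * g)%N ->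
  (1 <= lam)%N -> (2 <= g)%N ->
  ~ ((lam, g) = (1, 2)%N \/ (lam, g) = (1, 3)%N \/ (lam, g) = (2, 2)%N) ->
  exists S : {set Bk},
    (#|S|%:Z = Num.ceil ((#|P|%:R : R) * ln (#|P|%:R : R) / (k%:R - lam%:R)))
    /\ semi_resolving_points inc S.
Proof.
move=> STD card_P k_def lam_ge1 g_ge2 not_small.
have card_Bk : #|Bk| = #|P| by rewrite (card_TD_points STD.2) card_P k_def; nia.
have P_gt0 : (0 < #|P|)%N by rewrite card_P; nia.
have kl_gt0 : (0 < k - lam)%N by rewrite k_def; nia.
have ln_le : ln (#|P|%:R : R) <= (k - lam)%:R.
  by rewrite card_P k_def; exact: ln_mul_sq_le.
rewrite -natrB; last by rewrite k_def; nia.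
have [N N_def [N_le dN_ge]] := ceil_mul_ln_div P_gt0 kl_gt0 ln_le.
have [S card_S resolving] : exists2 S : {set Bk}, #|S| = N & semi_resolving_points inc S.
  apply: (exists_semi_resolving_points (R := R) (d := 2 * (k - lam))).
  - by rewrite card_Bk P_gt0 /=.
  - by rewrite card_Bk card_P k_def; nia.
  - by rewrite card_Bk.
  - by move=> x y neq_xy; exact: STD_card_separating_blocks STD neq_xy.
  - by move: dN_ge; rewrite -card_Bk natrM; nra.
by exists S; rewrite card_S.
Qed.
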